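(* For $k \in \mathbb{N}$ let $o(k) \in \mathbb{N}_0$ be the smallest $n \in \mathbb{N}_0$ with $2^n - n \ge k$. Then (1) $\{n(F) : F \in \mathcal{UHIT}_{\delta=k}\} = \{n(F) : F \in \mathcal{MU}_{\delta=k}\} = \{n \in \mathbb{N}_0 : n \ge o(k)\}$; (2) $\{c(F) : F \in \mathcal{UHIT}_{\delta=k}\} = \{c(F) : F \in \mathcal{MU}_{\delta=k}\} = \{n \in \mathbb{N} : n \ge o(k) + k\}$.
   Context: Literals come with a fixed-point-free involution $x \mapsto \overline{x}$; variables are positive literals. A clause is a finite set $C$ of literals with $C \cap \overline{C} = \emptyset$; a clause-set is a finite set of clauses. $\mathrm{var}(F)$, $n(F) = |\mathrm{var}(F)|$, $c(F) = |F|$, $\delta(F) = c(F) - n(F)$. $\mathcal{MU}$ is the class of minimally unsatisfiable clause-sets (unsatisfiable, but removing any clause gives a satisfiable clause-set). $F$ is hitting if for all distinct $C, D \in F$, $C \cap \overline{D} \ne \emptyset$; $\mathcal{UHIT}$ is the class of unsatisfiable hitting clause-sets. $\mathcal{C}_{\delta=k} = \{F \in \mathcal{C} : \delta(F) = k\}$. *)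

From mathcomp Require Import all_boot all_order all_algebra.
From mathcomp Require Import finmap zify.
Set Implicit Arguments. Unset Strict Implicit. Unset Printing Implicit Defensive.
Local Open Scope fset_scope.

(* A literal is a pair (variable, sign); variables are natural numbers.
   The positive literal of variable v is (v, true). *)
Definition lit := (nat * bool)%type.
Definition comp (l : lit) : lit := (l.1, ~~ l.2).

Definition clause := {fset lit}.
Definition clauseset := {fset clause}.

Definition is_clause (C : clause) : Prop := forall l, l \in C -> comp l \notin C.
Definition is_clauseset (F : clauseset) : Prop := forall C, C \in F -> is_clause C.

Definition vars (F : clauseset) : {fset nat} :=
  [fset l.1 | l in \bigcup_(C <- F) C].
Definition nvar (F : clauseset) : nat := #|` vars F|.
Definition ncl (F : clauseset) : nat := #|` F|.
Definition deficiency (F : clauseset) : int := (ncl F)%:Z - (nvar F)%:Z.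

Definition sat_clause (f : nat -> bool) (C : clause) : Prop :=
  exists2 l, l \in C & f l.1 = l.2.
Definition satisfiable (F : clauseset) : Prop :=
  exists f : nat -> bool, forall C, C \in F -> sat_clause f C.

Definition MU (F : clauseset) : Prop :=
  [/\ is_clauseset F, ~ satisfiable F &
      forall C, C \in F -> satisfiable (F `\ C)].

Definition hitting (F : clauseset) : Prop :=
  forall C D, C \in F -> D \in F -> C <> D -> exists2 l, l \in C & comp l \in D.

Definition UHIT (F : clauseset) : Prop :=
  [/\ is_clauseset F, ~ satisfiable F & hitting F].

Lemma o_exists (k : nat) : exists n, k <= 2 ^ n - n.
Proof.
exists k; suff: k + k <= 2 ^ k by lia.
elim: k => // k IH; rewrite expnS.
case: k IH => // k IH; have := ltn_expl k.+1 (isT : 1 < 2); lia.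
Qed.

Definition o (k : nat) : nat := ex_minn (o_exists k).

From Pilot Require Import Defs.
From mathcomp Require Import all_boot all_order all_algebra.
From mathcomp Require Import finmap zify.
From Stdlib Require Import ClassicalEpsilon.
Set Implicit Arguments. Unset Strict Implicit. Unset Printing Implicit Defensive.
Local Open Scope fset_scope.

(* Every UHIT clause-set is MU: the assignment falsifying one clause satisfies all
   others, since each of them clashes with it.  Conversely, every clause C of an MU
   clause-set F has a separating assignment (falsifying C, satisfying F \ C), and
   these are pairwise different on var(F); hence c(F) <= 2^n(F), i.e. n + k <= 2^n,
   i.e. n >= o(k).  For the converse, any L clauses with n < L <= 2^n are realised
   by a UHIT clause-set on exactly n variables, built by branching on a fresh
   variable v: adding v to every clause of A and ~v to every clause of B preserves
   unsatisfiability and the hitting property, and adds up the clause counts. *)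

Lemma varsP (F : clauseset) x :
  reflect (exists C l, [/\ C \in F, l \in C & l.1 = x]) (x \in vars F).
Proof.
apply: (iffP idP).
- case/imfsetP => /= l /bigfcupP [C /andP [CF _] lC] ->.
  by exists C, l.
- case=> C [l [CF lC <-]]; apply/imfsetP; exists l => //=.
  by apply/bigfcupP; exists C => //; rewrite CF.
Qed.

Lemma notin_vars_lit F v C l : v \notin vars F -> C \in F -> l \in C -> l.1 != v.
Proof.
move=> vF CF lC; apply: contraNneq vF => <-; apply/varsP.
by exists C, l.
Qed.

Lemma nvar_iota F m : (forall x, (x \in vars F) = (x < m)) -> nvar F = m.
Proof.
move=> varsF; rewrite /nvar.
have -> : vars F = [fset x in iota 0 m].
  by apply/fsetP => x; rewrite inE mem_iota /= add0n varsF.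
by rewrite card_fseq undup_id ?iota_uniq // size_iota.
Qed.

Lemma unsat_nonempty F : ~ satisfiable F -> exists C, C \in F.
Proof.
move=> unsatF; have [F0|[C CF]] := fset_0Vmem F; last by exists C.
by case: unsatF; exists (fun _ => true) => C; rewrite F0.
Qed.

Lemma sat_clause1U f l C : sat_clause f (l |` C) <-> f l.1 = l.2 \/ sat_clause f C.
Proof.
split.
- case=> l'; rewrite in_fset1U => /orP [/eqP -> ->|l'C e]; first by left.
  by right; exists l'.
- case=> [e|[l' l'C e]]; first by exists l; rewrite ?in_fset1U ?eqxx.
  by exists l' => //; rewrite in_fset1U l'C orbT.
Qed.

Definition add_lit (l : lit) (F : clauseset) : clauseset := [fset l |` C | C in F].

Lemma add_litP l F D : reflect (exists2 C, C \in F & D = l |` C) (D \in add_lit l F).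
Proof. exact: imfsetP. Qed.

Section AddLit.
Variables (l : lit) (F : clauseset).
Hypothesis lF : l.1 \notin vars F.

Lemma add_lit_clauseset : is_clauseset F -> is_clauseset (add_lit l F).
Proof.
move=> clF _ /add_litP [C CF ->] l'.
have notin_C l1 : l1 \in C -> l1.1 != l.1 by move/(notin_vars_lit lF CF).
rewrite !in_fset1U /Defs.comp => /orP [/eqP ->|l'C].
  apply/negP => /orP [/eqP|/notin_C]; first by case: (l) => ? [].
  by rewrite eqxx.
apply/negP => /orP [/eqP e|]; last exact/negP/clF.
by have := notin_C _ l'C; rewrite -[l'.1]/((l'.1, ~~ l'.2).1) e eqxx.
Qed.

Lemma card_add_lit : #|` add_lit l F| = #|` F|.
Proof.
rewrite card_in_imfset //= => C D CF DF CD; apply/fsetP => l'.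
have := congr1 (fun S => l' \in S) CD; rewrite /= !in_fset1U.
have [-> _|//] := eqVneq l' l.
have notin_l E : E \in F -> (l \in E) = false.
  by move=> EF; apply/negP => /(notin_vars_lit lF EF); rewrite eqxx.
by rewrite !notin_l.
Qed.
End AddLit.

Lemma add_lit_hitting l F : hitting F -> hitting (add_lit l F).
Proof.
move=> hitF _ _ /add_litP [C CF ->] /add_litP [D DF ->] CD.
have [|l' l'C l'D] := hitF C D CF DF; first by move=> eCD; apply: CD; rewrite eCD.
by exists l'; rewrite in_fset1U ?l'C ?l'D orbT.
Qed.

Lemma sat_add_lit f l F : (forall D, D \in add_lit l F -> sat_clause f D) ->
  f l.1 != l.2 -> forall C, C \in F -> sat_clause f C.
Proof.
move=> satf fl C CF.
have /sat_clause1U [fl_eq|//] : sat_clause f (l |` C) by apply/satf/add_litP; exists C.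
by rewrite fl_eq eqxx in fl.
Qed.

Definition branch (v : nat) (A B : clauseset) : clauseset :=
  add_lit (v, true) A `|` add_lit (v, false) B.

Section Branch.
Variables (v : nat) (A B : clauseset).
Hypotheses (vA : v \notin vars A) (vB : v \notin vars B).

Lemma branch_unsat : ~ satisfiable A -> ~ satisfiable B -> ~ satisfiable (branch v A B).
Proof.
move=> unsatA unsatB [f satf]; case fv: (f v).
- apply: unsatB; exists f; apply: (@sat_add_lit _ (v, false)); last by rewrite fv.
  by move=> D DB; apply: satf; rewrite in_fsetU DB orbT.
- apply: unsatA; exists f; apply: (@sat_add_lit _ (v, true)); last by rewrite fv.
  by move=> D DA; apply: satf; rewrite in_fsetU DA.
Qed.

Lemma branch_hitting : hitting A -> hitting B -> hitting (branch v A B).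
Proof.
move=> /(add_lit_hitting (l := (v, true))) hitA.
move=> /(add_lit_hitting (l := (v, false))) hitB C D.
rewrite !in_fsetU => /orP [CA|CB] /orP [DA|DB]; [exact: hitA | | | exact: hitB].
- move: CA DB => /add_litP [C' _ ->] /add_litP [D' _ ->] _.
  by exists (v, true); rewrite in_fset1U eqxx.
- move: CB DA => /add_litP [C' _ ->] /add_litP [D' _ ->] _.
  by exists (v, false); rewrite in_fset1U eqxx.
Qed.

Lemma branch_uhit : UHIT A -> UHIT B -> UHIT (branch v A B).
Proof.
move=> [clA unsatA hitA] [clB unsatB hitB]; split.
- move=> C; rewrite in_fsetU => /orP [].
  + exact: add_lit_clauseset.
  + exact: add_lit_clauseset.
- exact: branch_unsat.
- exact: branch_hitting.
Qed.

Lemma card_branch : ncl (branch v A B) = (ncl A + ncl B)%N.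
Proof.
have := cardfsUI (add_lit (v, true) A) (add_lit (v, false) B).
suff -> : add_lit (v, true) A `&` add_lit (v, false) B = fset0.
  by rewrite cardfs0 addn0 !card_add_lit.
apply/fsetP => D; rewrite in_fsetI in_fset0.
apply/negP => /andP [/add_litP [C _ ->] /add_litP [C' C'B e]].
have : (v, true) \in (v, false) |` C' by rewrite -e in_fset1U eqxx.
rewrite in_fset1U => /orP [/eqP //|/(notin_vars_lit vB C'B)].
by rewrite eqxx.
Qed.

Lemma in_vars_branch x : (exists C, C \in A) ->
  (x \in vars (branch v A B)) = [|| x == v, x \in vars A | x \in vars B].
Proof.
move=> [C0 C0A]; apply/varsP/or3P.
- case=> D [l [] ]; rewrite in_fsetU => /orP [] /add_litP [C CF ->];
    rewrite in_fset1U => /orP [/eqP -> <- | lC <-]; try exact: Or31.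
  + by apply: Or32; apply/varsP; exists C, l.
  + by apply: Or33; apply/varsP; exists C, l.
- have add_litA C : C \in A -> (v, true) |` C \in branch v A B.
    by move=> CA; rewrite in_fsetU in_imfset.
  have add_litB C : C \in B -> (v, false) |` C \in branch v A B.
    by move=> CB; rewrite in_fsetU [X in _ || X]in_imfset ?orbT.
  case=> [/eqP ->|/varsP [C [l [CA lC <-]]]|/varsP [C [l [CB lC <-]]]].
  + by exists ((v, true) |` C0), (v, true); rewrite add_litA // in_fset1U eqxx.
  + by exists ((v, true) |` C), l; rewrite add_litA // in_fset1U lC orbT.
  + by exists ((v, false) |` C), l; rewrite add_litB // in_fset1U lC orbT.
Qed.
End Branch.

Lemma uhit_fset0 : UHIT [fset fset0].
Proof.
split.
- by move=> C; rewrite in_fset1 => /eqP -> l; rewrite in_fset0.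
- by case=> f /(_ fset0); rewrite in_fset1 eqxx => /(_ isT) [l]; rewrite in_fset0.
- by move=> C D; rewrite !in_fset1 => /eqP -> /eqP ->.
Qed.

Lemma uhit_exists n L : 0 < L <= 2 ^ n ->
  exists2 F, UHIT F & ncl F = L /\ forall x, (x \in vars F) = (x < minn n L.-1).
Proof.
elim: n L => [|n IH] L L_range.
  have -> : L = 1 by move: L_range; rewrite expn0; lia.
  exists [fset fset0]; first exact: uhit_fset0.
  split; first exact: cardfs1.
  move=> x; apply/varsP => -[C [l [] ]].
  by rewrite in_fset1 => /eqP -> ; rewrite in_fset0.
have pow2S : 2 ^ n.+1 = 2 * 2 ^ n by rewrite expnS.
have n_lt_pow2 : n < 2 ^ n by rewrite ltn_expl.
have [L_small|L_large] := leqP L n.+1.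
  have [F uhitF [nclF varsF]] := IH L ltac:(lia).
  exists F => //; split => // x; rewrite varsF; congr (x < _); lia.
(* The A-side keeps more than n clauses, so it already uses all n old variables. *)
pose L2 := minn (L - n.+1) (2 ^ n).
have [A uhitA [nclA varsA]] := IH (L - L2) ltac:(lia).
have [B uhitB [nclB varsB]] := IH L2 ltac:(lia).
have nA : n \notin vars A by rewrite varsA; lia.
have nB : n \notin vars B by rewrite varsB; lia.
exists (branch n A B); first exact: branch_uhit.
split; first by rewrite card_branch // nclA nclB; lia.
move=> x; rewrite in_vars_branch; last by case: uhitA => _ /unsat_nonempty.
by rewrite varsA varsB; lia.
Qed.

Lemma uhit_mu F : UHIT F -> MU F.
Proof.
case=> clF unsatF hitF; split => // C CF.
(* The assignment falsifying [C]. *)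
exists (fun x => (x, false) \in C) => D; rewrite in_fsetD1 => /andP [DC DF].
have [l lC lD] := hitF C D CF DF (fun eCD => negP DC (introT eqP (esym eCD))).
exists (Defs.comp l) => //; case: l lC {lD} => x [] lC //=.
exact/negbTE/(clF C CF (x, true)).
Qed.

Lemma mu_separating F C : MU F -> C \in F ->
  exists f, ~ sat_clause f C /\ forall D, D \in F `\ C -> sat_clause f D.
Proof.
case=> _ unsatF satF_C CF; have [f satf] := satF_C C CF.
exists f; split => // satC; apply: unsatF; exists f => D DF.
by have [->|DC] := eqVneq D C; last by apply: satf; rewrite in_fsetD1 DC.
Qed.

Lemma mu_ncl_le F : MU F -> ncl F <= 2 ^ nvar F.
Proof.
move=> muF.
have sepF C : exists f, C \in F ->
    ~ sat_clause f C /\ forall D, D \in F `\ C -> sat_clause f D.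
  have [CF|CnF] := boolP (C \in F); last by exists xpredT.
  by have [f sepf] := mu_separating muF CF; exists f.
pose g C := proj1_sig (constructive_indefinite_description _ (sepF C)).
have gP C : C \in F ->
    ~ sat_clause (g C) C /\ forall D, D \in F `\ C -> sat_clause (g C) D.
  exact: proj2_sig (constructive_indefinite_description _ (sepF C)).
pose true_vars C := [fset x in vars F | g C x].
(* If [D] and [C] had equal true variables, [g C] would satisfy [C] like [g D] does. *)
have true_vars_inj : {in F &, injective true_vars}.
  move=> C D CF DF eCD; apply/eqP/negPn/negP => CD.
  have [l lC gDl] := (gP D DF).2 C ltac:(by rewrite in_fsetD1 CD CF).
  apply: (gP C CF).1; exists l => //.
  have lF : l.1 \in vars F by apply/varsP; exists C, l.
  by have := congr1 (fun S => l.1 \in S) eCD; rewrite /= !inE lF /= gDl.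
have -> : ncl F = #|` [fset true_vars C | C in F]| by rewrite card_in_imfset.
rewrite /nvar -card_fpowerset.
apply: fsubset_leq_card; apply/fsubsetP => _ /imfsetP [C CF ->].
by rewrite fpowersetE; apply/fsubsetP => x; rewrite inE => /andP [].
Qed.

Lemma leq_pow2_subn : {homo (fun n => 2 ^ n - n) : m n / m <= n}.
Proof.
move=> m n; elim: n => [|n IH]; first by rewrite leqn0 => /eqP ->.
rewrite leq_eqVlt ltnS => /orP [/eqP -> //|/IH].
have := ltn_expl n (isT : 1 < 2); rewrite expnS; lia.
Qed.

Lemma leq_oE k n : (o k <= n) = (k <= 2 ^ n - n).
Proof.
rewrite /o; case: ex_minnP => m k_le min_m.
apply/idP/idP => [/leq_pow2_subn|/min_m //]; exact: leq_trans.
Qed.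

Lemma deficiencyE F k : deficiency F = Posz k <-> ncl F = (nvar F + k)%N.
Proof. by rewrite /deficiency; split; lia. Qed.

Lemma mu_o_le F k : MU F -> deficiency F = Posz k -> o k <= nvar F.
Proof.
move=> /mu_ncl_le ncl_le /deficiencyE ncl_def; rewrite leq_oE; lia.
Qed.

Lemma uhit_of_o_le k n : 0 < k -> o k <= n ->
  exists F, UHIT F /\ deficiency F = Posz k /\ nvar F = n.
Proof.
rewrite leq_oE => k_gt0 k_le.
have n_lt_pow2 : n < 2 ^ n by rewrite ltn_expl.
have [F uhitF [nclF varsF]] := uhit_exists (n := n) (L := n + k) ltac:(lia).
have nvarF : nvar F = n by apply: nvar_iota => x; rewrite varsF; congr (x < _); lia.
by exists F; do 2!split => //; apply/deficiencyE; rewrite nclF nvarF.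
Qed.

Lemma iff_cycle3 (P Q R : Prop) : (P -> Q) -> (Q -> R) -> (R -> P) -> (P <-> Q) /\ (Q <-> R).
Proof. by move=> PQ QR RP; split; split; auto. Qed.

Theorem theorem6p13 (k : nat) (hk : 0 < k) :
  (forall n : nat,
     ((exists F, UHIT F /\ deficiency F = Posz k /\ nvar F = n) <->
      (exists F, MU F /\ deficiency F = Posz k /\ nvar F = n)) /\
     ((exists F, MU F /\ deficiency F = Posz k /\ nvar F = n) <-> o k <= n)) /\
  (forall m : nat,
     ((exists F, UHIT F /\ deficiency F = Posz k /\ ncl F = m) <->
      (exists F, MU F /\ deficiency F = Posz k /\ ncl F = m)) /\
     ((exists F, MU F /\ deficiency F = Posz k /\ ncl F = m) <-> (0 < m /\ o k + k <= m))).
Proof.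
have mu_of_uhit (P : clauseset -> Prop) : (exists F, UHIT F /\ P F) -> exists F, MU F /\ P F.
  by case=> F [/uhit_mu muF PF]; exists F.
split=> [n|m]; apply: iff_cycle3; try exact: mu_of_uhit.
- by case=> F [muF [defF <-]]; apply: mu_o_le defF.
- exact: uhit_of_o_le.
- case=> F [muF [defF <-]]; have := mu_o_le muF defF.
  by move/deficiencyE: defF => ->; lia.
- case=> _ m_ge.
  have [F [uhitF [defF nvarF]]] := uhit_of_o_le (n := m - k) hk ltac:(lia).
  by exists F; do 2!split => //; move/deficiencyE: defF; lia.
Qed.
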